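(* For any compact metric measure space $(X,d_X,\mu_X)$, the eigenvalue $\lambda_1$ of largest absolute value of the distance kernel operator $D^X$ satisfies $|\lambda_1|\le\operatorname{diam}(X)\operatorname{vol}(X)$, and this bound is asymptotically sharp: there exist compact metric measure spaces $X_n$ for which $|\lambda_1(X_n)|/(\operatorname{diam}(X_n)\operatorname{vol}(X_n))\to1$.
   Context: A metric measure space carries a Radon Borel measure $\mu_X$; $\operatorname{vol}(X)=\mu_X(X)$ and $\operatorname{diam}(X)=\sup\{d_X(x,x'):x,x'\in X\}$. The distance kernel operator is $(D^Xf)(x)=\int_X f(y)d_X(x,y)\,d\mu_X(y)$ on $L^2(X,\mu_X)$; its eigenvalues are ordered so that $|\lambda_1|\ge|\lambda_2|\ge\cdots$. *)

From HB Require Import structures.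
From mathcomp Require Import all_boot all_order all_algebra.
From mathcomp Require Import all_classical all_reals all_analysis.
Set Implicit Arguments. Unset Strict Implicit. Unset Printing Implicit Defensive.
Import Order.TTheory GRing.Theory Num.Theory.
Local Open Scope classical_set_scope.
Local Open Scope ring_scope.

Definition dopen {T : Type} {R : realType} (d : T -> T -> R) (A : set T) : Prop :=
  forall x, A x -> exists e : R, 0 < e /\ forall y, d x y < e -> A y.

Definition dcompact {T : Type} {R : realType} (d : T -> T -> R) : Prop :=
  forall (I : Type) (U : I -> set T), (forall i, dopen d (U i)) ->
    setT `<=` \bigcup_i U i ->
    exists F : set I, finite_set F /\ setT `<=` \bigcup_(i in F) U i.

(* A compact metric measure space: a compact metric space whose measurable
   sets are exactly its Borel sets, with a finite Borel measure (on a compact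
   metric space every finite Borel measure is Radon, and a Radon measure on a
   compact space is finite). *)
Record cmms (R : realType) := CMMS {
  cm_disp : measure_display;
  cm_pt : measurableType cm_disp;
  cm_d : cm_pt -> cm_pt -> R;
  cm_d_ge0 : forall x y, 0 <= cm_d x y;
  cm_d_eq0 : forall x y, cm_d x y = 0 <-> x = y;
  cm_d_sym : forall x y, cm_d x y = cm_d y x;
  cm_d_tri : forall x y z, cm_d x z <= cm_d x y + cm_d y z;
  cm_compact : dcompact cm_d;
  cm_borel : (@measurable _ cm_pt) = <<s [set A | dopen cm_d A] >>;
  cm_mu : {measure set cm_pt -> \bar R};
  cm_mu_fin : (cm_mu setT < +oo)%E
}.


Definition vol {R : realType} (X : cmms R) : R := fine (@cm_mu R X setT).

Definition diam {R : realType} (X : cmms R) : R :=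
  sup [set r : R | exists x y, r = @cm_d R X x y].

Definition isL2 {R : realType} (X : cmms R) (f : cm_pt X -> R) : Prop :=
  measurable_fun setT f /\ (\int[@cm_mu R X]_x ((f x) ^+ 2)%:E < +oo)%E.

Definition distop {R : realType} (X : cmms R) (f : cm_pt X -> R) (x : cm_pt X)
  : \bar R := \int[@cm_mu R X]_y (f y * @cm_d R X x y)%:E.

Definition eigenvalue {R : realType} (X : cmms R) (lam : R) : Prop :=
  exists f : cm_pt X -> R, isL2 f /\
    ~ {ae @cm_mu R X, forall x, f x = 0} /\
    {ae @cm_mu R X, forall x, distop f x = (lam * f x)%:E}.

Definition top_eigenvalue {R : realType} (X : cmms R) (lam : R) : Prop :=
  eigenvalue X lam /\ forall mu, eigenvalue X mu -> `|mu| <= `|lam|.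

(* If D^X f = lam f for some f in L^2, hence in L^1 since mu_X is finite,
   and f is not a.e. zero, then a.e. |lam| |f x| = |int f(y) d(x,y) dmu(y)|
   is at most diam(X) ||f||_1; integrating over X gives
   |lam| ||f||_1 <= diam(X) vol(X) ||f||_1 with 0 < ||f||_1 < oo.
   Sharpness: on n+1 points at mutual distance 1 with the counting measure,
   D^X f = (sum f) - f, whose eigenvalues are n (on constants) and -1, so
   |lambda_1| / (diam vol) = n / (n+1). *)

From Pilot Require Import Defs.
From HB Require Import structures.
From mathcomp Require Import all_boot all_order all_algebra.
From mathcomp Require Import all_classical all_reals all_analysis.
From mathcomp Require Import measurable_realfun lra.
Import Order.TTheory GRing.Theory Num.Theory numFieldNormedType.Exports.
Local Open Scope classical_set_scope.
Local Open Scope ring_scope.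

Lemma normr_le1Dsqr (R : realDomainType) (a : R) : `|a| <= 1 + a ^+ 2.
Proof. by rewrite -real_normK ?num_real//; have := normr_ge0 a; nra. Qed.

Section compact_metric_measure_space.
Variables (R : realType) (X : cmms R).
Local Notation T := (cm_pt X).
Local Notation d := (@cm_d R X).
Local Notation mu := (@cm_mu R X).

Lemma cm_ball_open (p : T) (r : R) : dopen d [set y | d p y < r].
Proof.
move=> y /= dpy; exists (r - d p y); split; first by rewrite subr_gt0.
by move=> z dyz /=; have := cm_d_tri p y z; lra.
Qed.

Lemma cm_d_bounded : exists B, forall x y, d x y <= B.
Proof.
pose p : T := point.
have [F [finF cover]] := @cm_compact R X nat (fun i => [set y | d p y < i%:R])
  (fun i => cm_ball_open p i%:R)
  (fun y _ => ex_intro2 _ _ (Num.bound (d p y)) I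
                (archi_boundP (cm_d_ge0 p y))).
pose N := (\max_(i <- finmap.enum_fset (fset_set F)) i)%N.
have dpN y : d p y < N%:R.
  have [i Fi dpi] := cover y I; apply: (lt_le_trans dpi); rewrite ler_nat.
  by apply: (@leq_bigmax_seq _ _ xpredT id); rewrite ?in_fset_set ?inE.
exists (N%:R + N%:R) => x y.
have := cm_d_tri x p y; rewrite (cm_d_sym x p).
by have := dpN x; have := dpN y; lra.
Qed.

Lemma cm_d_le_diam x y : d x y <= diam X.
Proof.
have [B dB] := cm_d_bounded.
by apply: ub_le_sup; [exists B => _ [a [b ->]] | exists x, y].
Qed.

Lemma diam_ge0 : 0 <= diam X.
Proof. exact: le_trans (cm_d_ge0 point point) (cm_d_le_diam _ _). Qed.

Lemma measurable_cm_d x : measurable_fun setT (d x).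
Proof.
apply: (measurability (@RGenInftyO.G R)); first exact: RGenInftyO.measurableE.
move=> _ [_ [r ->] <-]; rewrite cm_borel setTI.
by apply: sub_sigma_algebra; exact: cm_ball_open.
Qed.

Lemma cm_muT : mu setT = (vol X)%:E.
Proof. by rewrite /vol fineK// ge0_fin_numE ?cm_mu_fin. Qed.

Local Open Scope ereal_scope.

Lemma isL2_integral_abs_lty (f : T -> R) :
  isL2 f -> \int[mu]_x (`|f x|)%:E < +oo.
Proof.
move=> [mf f2_lty].
have mf2 : measurable_fun setT (fun x => (f x ^+ 2)%:E).
  exact/measurable_EFinP/measurable_funX.
apply: (@le_lt_trans _ _ (\int[mu]_x ((cst 1%:E) x + (f x ^+ 2)%:E))).
  apply: ge0_le_integral => //.
  - by apply/measurable_EFinP; exact: measurableT_comp.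
  - exact: emeasurable_funD.
  - by move=> x _; rewrite -EFinD lee_fin normr_le1Dsqr.
rewrite ge0_integralD//; last by move=> x _; rewrite lee_fin sqr_ge0.
by rewrite integral_cst// mul1e lte_add_pinfty// cm_mu_fin.
Qed.

Lemma integral_abs_eq0_ae (f : T -> R) : measurable_fun setT f ->
  \int[mu]_x (`|f x|)%:E = 0 -> {ae mu, forall x, f x = 0%R}.
Proof.
move=> mf f0; have : \int[mu]_x `|(f x)%:E| = 0.
  by rewrite -f0; apply: eq_integral => x _; rewrite abse_EFin.
move/(ae_eq_integral_abs mu measurableT ((measurable_EFinP _ _).2 mf)).
by apply: filterS => x /(_ I) [].
Qed.

Lemma abse_distop_le (f : T -> R) x : measurable_fun setT f ->
  `|distop f x| <= (diam X)%:E * \int[mu]_y (`|f y|)%:E.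
Proof.
move=> mf; rewrite /distop.
have mfd : measurable_fun setT (fun y => (f y * d x y)%:E).
  exact/measurable_EFinP/measurable_funM/measurable_cm_d.
have mabsf : measurable_fun setT (fun y => (`|f y|)%:E).
  by apply/measurable_EFinP; exact: measurableT_comp.
apply: (le_trans (le_abse_integral mu measurableT mfd)).
rewrite -ge0_integralZl_EFin ?diam_ge0//.
apply: ge0_le_integral => //.
- exact: measurableT_comp.
- exact: emeasurable_funM.
- move=> y _; rewrite abse_EFin lee_fin normrM (ger0_norm (cm_d_ge0 _ _)).
  by rewrite mulrC ler_wpM2r ?cm_d_le_diam.
Qed.

Local Close Scope ereal_scope.

Lemma eigenvalue_norm_le lam :
  Defs.eigenvalue X lam -> `|lam| <= diam X * vol X.
Proof.
move=> [f [[mf f2_lty] [f_neq0 eigf]]].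
have mabsf : measurable_fun setT (fun x => (`|f x|)%:E).
  by apply/measurable_EFinP; exact: measurableT_comp.
have L1_fin : (\int[mu]_x (`|f x|)%:E)%E \is a fin_num.
  by rewrite ge0_fin_numE ?isL2_integral_abs_lty// integral_ge0.
pose L1 := fine (\int[mu]_x (`|f x|)%:E)%E.
have L1E : (\int[mu]_x (`|f x|)%:E)%E = L1%:E by rewrite fineK.
have L1_gt0 : 0 < L1.
  rewrite lt_def -lee_fin -L1E integral_ge0// andbT.
  apply/negP => /eqP L10; apply: f_neq0; apply: integral_abs_eq0_ae => //.
  by rewrite L1E L10.
have pointwise : {ae mu, forall x, setT x ->
    (`|lam|%:E * (`|f x|)%:E <= (diam X * L1)%:E)%E}.
  apply: filterS eigf => x eigfx _; rewrite -EFinM -normrM -abse_EFin -eigfx.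
  by rewrite EFinM -L1E abse_distop_le.
have : (\int[mu]_x (`|lam|%:E * (`|f x|)%:E) <= \int[mu]_x (diam X * L1)%:E)%E.
  apply: ae_ge0_le_integral pointwise => //; first exact: emeasurable_funM.
  by move=> x _; rewrite lee_fin mulr_ge0 ?diam_ge0 ?ltW.
rewrite ge0_integralZl_EFin// L1E integral_cst// cm_muT -!EFinM lee_fin.
by rewrite -mulrA [L1 * _]mulrC mulrA ler_pM2r.
Qed.

End compact_metric_measure_space.

Definition fin_pts (n : nat) := 'I_n.+1.
HB.instance Definition _ n := Finite.on (fin_pts n).
HB.instance Definition _ n := isPointed.Build (fin_pts n) ord0.
HB.instance Definition _ n := @isMeasurable.Build default_measure_display
  (fin_pts n) discrete_measurable discrete_measurable0
  discrete_measurableC discrete_measurableU.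

Section discrete_space.
Variables (R : realType) (n : nat).
Local Notation T := (fin_pts n).

Definition counting_pts : {measure set T -> \bar R} :=
  msum (fun i => @dirac _ T (inord i) R) n.+1.

Lemma counting_ptsE (A : set T) :
  counting_pts A = (\sum_(i : T) (i \in A)%:R)%:E.
Proof.
rewrite /counting_pts /= /msum /= sumEFin; congr (_%:E).
by apply: eq_bigr => i _; rewrite inord_val indicE.
Qed.

Lemma counting_ptsT : counting_pts setT = n.+1%:R%:E.
Proof.
rewrite counting_ptsE; under eq_bigr do rewrite in_setT.
by rewrite sumr_const card_ord.
Qed.

Lemma counting_pts_ae (P : T -> Prop) :
  {ae counting_pts, forall x, P x} -> forall x, P x.
Proof.
move=> [N [_ N0 notPN]] x; apply: contrapT => notPx.
move: N0; rewrite counting_ptsE => -[] /eqP.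
rewrite psumr_eq0// => /allP /(_ x (mem_index_enum _)).
by rewrite mem_set ?pnatr_eq0//; exact: notPN.
Qed.

Local Open Scope ereal_scope.

Lemma ge0_integral_counting_pts (g : T -> \bar R) : (forall x, 0 <= g x) ->
  \int[counting_pts]_x g x = \sum_(i : T) g i.
Proof.
move=> g0; rewrite ge0_integral_measure_sum//; apply: eq_bigr => i _.
by rewrite integral_dirac// diracT mul1e inord_val.
Qed.

Lemma integral_counting_pts (g : T -> R) :
  \int[counting_pts]_x (g x)%:E = (\sum_(i : T) g i)%:E.
Proof.
rewrite integralE (funerpos g) (funerneg g).
rewrite !ge0_integral_counting_pts => [|x|x]; rewrite ?lee_fin ?funrpos_ge0 //.
by rewrite !sumEFin -EFinB -sumrB -[in RHS](funrposBneg g).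
Qed.

Local Close Scope ereal_scope.

Definition discrete_dist (x y : T) : R := (x != y)%:R.

Lemma discrete_dist_ge0 x y : 0 <= discrete_dist x y.
Proof. exact: ler0n. Qed.

Lemma discrete_dist_le1 x y : discrete_dist x y <= 1.
Proof. by rewrite lern1 leq_b1. Qed.

Lemma discrete_dist_eq0 x y : discrete_dist x y = 0 <-> x = y.
Proof.
rewrite /discrete_dist; case: eqVneq => [->|xy]; first by split.
by split=> [/eqP|/eqP]; rewrite ?oner_eq0 ?(negbTE xy).
Qed.

Lemma discrete_dist_sym x y : discrete_dist x y = discrete_dist y x.
Proof. by rewrite /discrete_dist eq_sym. Qed.

Lemma discrete_dist_tri x y z :
  discrete_dist x z <= discrete_dist x y + discrete_dist y z.
Proof.
rewrite /discrete_dist -natrD ler_nat.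
case: (eqVneq x y) => [->//|_].
by rewrite (leq_trans (leq_b1 _)) ?leq_addr.
Qed.

Lemma discrete_dist_open (A : set T) : dopen discrete_dist A.
Proof.
move=> x Ax; exists 1; split => // y.
by rewrite /discrete_dist; case: eqVneq => [<-|]; rewrite ?ltxx.
Qed.

Lemma discrete_dist_compact : dcompact discrete_dist.
Proof.
move=> I U _ cover.
have /choice [i Ui] : forall x : T, exists i, U i x.
  by move=> x; have [i _ Uix] := cover x Logic.I; exists i.
exists (range i); split; first exact: finite_image.
by move=> x _; exists (i x) => //; exists x.
Qed.

Lemma discrete_dist_borel :
  (@measurable _ T) = <<s [set A | dopen discrete_dist A] >>.
Proof.
rewrite eqEsubset; split => A _ //.
by apply: sub_sigma_algebra; exact: discrete_dist_open.
Qed.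

Lemma counting_pts_fin : (counting_pts setT < +oo)%E.
Proof. by rewrite counting_ptsT ltry. Qed.

End discrete_space.

Definition discrete_cmms (R : realType) (n : nat) : cmms R :=
  CMMS (@discrete_dist_ge0 R n) (@discrete_dist_eq0 R n)
    (@discrete_dist_sym R n) (@discrete_dist_tri R n)
    (@discrete_dist_compact R n) (@discrete_dist_borel R n)
    (@counting_pts_fin R n).

Section discrete_cmms.
Variables (R : realType) (n : nat).
Local Notation X := (discrete_cmms R n).

Lemma vol_discrete_cmms : vol X = n.+1%:R.
Proof. by rewrite /vol /= counting_ptsT. Qed.

Lemma diam_discrete_cmms : (0 < n)%N -> diam X = 1.
Proof.
move=> n_gt0; rewrite /diam /=; apply/le_anti/andP; split.
  apply: ge_sup; first by exists 0, ord0, ord0.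
  by move=> _ [x [y ->]]; exact: discrete_dist_le1.
apply: ub_le_sup; first by exists 1 => _ [x [y ->]]; exact: discrete_dist_le1.
exists ord0, ord_max.
by rewrite /discrete_dist -(inj_eq val_inj) /= eq_sym -lt0n n_gt0.
Qed.

Lemma distop_discrete_cmms (f : fin_pts n -> R) x :
  distop (X := X) f x = (\sum_y f y - f x)%:E.
Proof.
rewrite /distop /= integral_counting_pts; congr (_%:E).
rewrite [in RHS](bigD1 x)//= addrC addrK (bigD1 x)//=.
rewrite /discrete_dist eqxx mulr0 add0r.
by apply: eq_bigr => y; rewrite eq_sym => ->; rewrite mulr1.
Qed.

Lemma eigenvalue_discrete_cmms : Defs.eigenvalue X n%:R.
Proof.
exists (fun=> 1); split; [split|split].
- exact: measurable_cst.
- by rewrite /= integral_counting_pts ltry.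
- by move=> /counting_pts_ae /(_ ord0) /eqP; rewrite oner_eq0.
- apply: aeW => x; rewrite distop_discrete_cmms sumr_const card_ord mulr1.
  by rewrite -addn1 natrD addrK.
Qed.

Lemma discrete_cmms_eigenvalueP m :
  Defs.eigenvalue X m -> m = n%:R \/ m = -1.
Proof.
move=> [f [_ [f_neq0 /counting_pts_ae eigf]]].
have sumE x : \sum_y f y = (m + 1) * f x.
  have := eigf x; rewrite distop_discrete_cmms => -[] /eqP.
  by rewrite subr_eq mulrDl mul1r => /eqP.
have [m1|m1] := eqVneq (m + 1) 0; [right | left].
  by apply/eqP; rewrite -subr_eq0 opprK m1.
have [x0 fx0] : exists x0, f x0 != 0.
  apply: contrapT => /forallNP f0; apply: f_neq0; apply: aeW => x.
  by apply/eqP/negPn/negP; exact: f0.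
have fE x : f x = f x0 by apply: (mulfI m1); rewrite -!sumE.
have : \sum_y f y = n.+1%:R * f x0.
  by under eq_bigr do rewrite fE; rewrite sumr_const card_ord mulr_natl.
by rewrite (sumE x0) => /(mulIf fx0); rewrite -addn1 natrD => /addIr.
Qed.

Lemma top_eigenvalue_discrete_cmms : (0 < n)%N -> top_eigenvalue X n%:R.
Proof.
move=> n_gt0; split=> [|m /discrete_cmms_eigenvalueP [->//|->]].
  exact: eigenvalue_discrete_cmms.
by rewrite normrN normr1 normr_nat ler1n.
Qed.

End discrete_cmms.

Lemma cvg_natr_ratio_succ (R : realType) :
  (fun n => n.+1%:R / n.+2%:R : R) @ \oo --> (1 : R).
Proof.
have -> : (fun n => n.+1%:R / n.+2%:R : R) = (fun n => 1 - @harmonic R n.+1).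
  apply/funext => n; rewrite /= -[n.+2]addn1 natrD.
  have n2_neq0 : n.+1%:R + 1 != 0 :> R by rewrite natr1 pnatr_eq0.
  by apply: (mulIf n2_neq0); rewrite mulrBl divfK // mulVf // mul1r addrK.
rewrite -[X in _ --> X]subr0; apply: cvgB; first exact: cvg_cst.
by rewrite (cvg_shiftS (@harmonic R)); exact: cvg_harmonic.
Qed.

Theorem lemma2p7 (R : realType) :
  (forall (X : cmms R) (lam : R), top_eigenvalue X lam ->
      `|lam| <= diam X * vol X) /\
  (exists (X : nat -> cmms R) (lam : nat -> R),
      (forall n, top_eigenvalue (X n) (lam n)) /\
      ((fun n => `|lam n| / (diam (X n) * vol (X n))) @ \oo --> (1 : R))).
Proof.
split=> [X lam [eig_lam _]|]; first exact: eigenvalue_norm_le.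
exists (fun n => discrete_cmms R n.+1), (fun n => n.+1%:R); split.
  by move=> n; exact: top_eigenvalue_discrete_cmms.
apply: cvg_trans (cvg_natr_ratio_succ R); apply: near_eq_cvg; near=> n.
by rewrite diam_discrete_cmms// vol_discrete_cmms mul1r normr_nat.
Unshelve. all: by end_near.
Qed.
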